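(* For every pair $(k,\ell)$ of positive integers and every prime power $q$, there is a constant $f(k,\ell,q)$ such that every simple, cosimple, $GF(q)$-representable $(k,\ell)$-uniform matroid $M$ satisfies $r(M)\leq f(k,\ell,q)$. Moreover, taking $f(k,\ell,q)$ to be the maximum rank of such a matroid, if $k\geq 2$ then $$f(k,\ell,q)\leq \max\{f(k-1,\ell+1,q),\ f(1,\ell,q)+(k-1)\}.$$
   Context: For positive integers $k,\ell$, a matroid is $(k,\ell)$-uniform if it has no minor isomorphic to $U_{k,k}\oplus U_{0,\ell}$. A matroid is cosimple if its dual is simple. *)

From HB Require Import structures.
From mathcomp Require Import all_boot all_order all_algebra all_field.
Set Implicit Arguments. Unset Strict Implicit. Unset Printing Implicit Defensive.

Record matroid (T : finType) := Matroid {
  ground : {set T};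
  indep : {set {set T}} }.

Definition is_matroid (T : finType) (M : matroid T) : Prop :=
  [/\ set0 \in indep M,
      (forall A : {set T}, A \in indep M -> A \subset ground M),
      (forall A B : {set T}, B \in indep M -> A \subset B -> A \in indep M) &
      (forall A B : {set T}, A \in indep M -> B \in indep M -> #|A| < #|B| ->
         exists2 x, x \in B :\: A & x |: A \in indep M)].

Definition mrank (T : finType) (M : matroid T) (X : {set T}) : nat :=
  \max_(A : {set T} | (A \in indep M) && (A \subset X)) #|A|.

Definition rk (T : finType) (M : matroid T) : nat := mrank M (ground M).

Definition is_basis (T : finType) (M : matroid T) (B : {set T}) : bool :=
  (B \in indep M) && (#|B| == rk M).

Definition delete (T : finType) (M : matroid T) (D : {set T}) : matroid T :=
  Matroid (ground M :\: D) [set A in indep M | A \subset ground M :\: D].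

Definition contract (T : finType) (M : matroid T) (C : {set T}) : matroid T :=
  Matroid (ground M :\: C)
    [set A : {set T} | (A \subset ground M :\: C) &&
             (mrank M (A :|: C) == #|A| + mrank M C)].

(* dual matroid M^* : bases are complements of bases *)
Definition dual (T : finType) (M : matroid T) : matroid T :=
  Matroid (ground M)
    [set A : {set T} | (A \subset ground M) &&
             [exists B : {set T}, is_basis M B && [disjoint A & B]]].

Definition simple (T : finType) (M : matroid T) : Prop :=
  (forall x : T, x \in ground M -> [set x] \in indep M) /\
  (forall x y : T, x \in ground M -> y \in ground M -> x != y ->
     [set x; y] \in indep M).

Definition cosimple (T : finType) (M : matroid T) : Prop := simple (dual M).

Definition iso (T T' : finType) (M : matroid T) (N : matroid T') : Prop :=
  exists f : T -> T',
    [/\ {in ground M &, injective f}, f @: ground M = ground N &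
        forall A : {set T}, A \subset ground M -> (A \in indep M <-> f @: A \in indep N)].

Definition is_minor (T : finType) (N M : matroid T) : Prop :=
  exists C D : {set T},
    [/\ C \subset ground M, D \subset ground M, [disjoint C & D] &
        N = delete (contract M C) D].

Definition U (r n : nat) : matroid 'I_n :=
  Matroid setT [set A : {set 'I_n} | #|A| <= r].

Definition dsum (T1 T2 : finType) (M1 : matroid T1) (M2 : matroid T2)
  : matroid (T1 + T2)%type :=
  Matroid (inl @: ground M1 :|: inr @: ground M2)
    [set A : {set (T1 + T2)%type} |
       ([set x | inl x \in A] \in indep M1) &&
       ([set y | inr y \in A] \in indep M2) &&
       (A \subset inl @: ground M1 :|: inr @: ground M2)].

Definition kl_uniform (k l : nat) (T : finType) (M : matroid T) : Prop :=
  ~ exists N : matroid T, is_minor N M /\ iso N (dsum (U k k) (U 0 l)).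

(* GF(q)-representable: some field with q elements and vectors v e in F^n
   such that A is independent iff the vectors (v a)_{a in A} are linearly
   independent (i.e. the #|A| x n matrix with these rows has rank #|A|). *)
Definition representable (q : nat) (T : finType) (M : matroid T) : Prop :=
  exists (F : finFieldType) (n : nat) (v : T -> 'rV[F]_n),
    #|F| = q /\
    forall A : {set T}, A \subset ground M ->
      (A \in indep M <->
       \rank (\matrix_(i < #|A|, j < n) v (@enum_val T (mem A) i) 0 j)%R = #|A|).

Definition prime_power (q : nat) : Prop :=
  exists p e, [/\ prime p, 0 < e & q = p ^ e].

Definition good (k l q : nat) (T : finType) (M : matroid T) : Prop :=
  [/\ is_matroid M, simple M, cosimple M, representable q M & kl_uniform k l M].

(* A matroid has a minor U_{k,k} (+) U_{0,l} iff some set X has corank r(M) - r(X) >= k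
   and nullity |X| - r(X) >= l: contract a basis C of X, keep k further elements of a basis
   extending C and l elements of X - C (these become loops), and delete the rest.

   Fix a basis B, a set N of min(l+1, |E - B|) elements outside B, and write the
   vectors of N in coordinates over B.  Basis elements whose coordinate columns on N coincide
   can be merged into their sum without losing N from the span.  Merging k+1 of them gives a set
   of corank >= k and nullity >= l when |N| = l+1; when N = E - B, merging two of them shows
   that deleting these two basis elements drops the rank, contradicting cosimplicity.  So each
   of the q^|N| possible columns occurs at most k times, and r(M) <= k q^(l+1).

   Let M attain f(k,l,q).  If M is not (k-1,l+1)-uniform, take X of corank >= k-1
   and nullity >= l+1; (k,l)-uniformity forces corank exactly k-1 and forbids removing one or
   two elements of X to lower r(X).  Hence M|X is simple, cosimple and (1,l)-uniform, and
   r(M) = r(X) + k - 1 <= f(1,l,q) + k - 1. *)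

From mathcomp Require Import all_boot all_order all_algebra all_field.
From mathcomp Require Import zify.
From Stdlib Require Import ClassicalEpsilon.
Set Implicit Arguments. Unset Strict Implicit. Unset Printing Implicit Defensive.
Import GRing.Theory.

Lemma exists_subset_card (T : finType) (S : {set T}) n :
  n <= #|S| -> exists2 A : {set T}, A \subset S & #|A| = n.
Proof.
rewrite -bin_gt0 -cards_draws => /card_gt0P[A].
by rewrite inE => /andP[AS /eqP cA]; exists A.
Qed.

Lemma card_preim_onto (T T' : finType) (f : T -> T') (G : {set T}) (S : {set T'}) :
  {in G &, injective f} -> f @: G = setT -> #|G :&: f @^-1: S| = #|S|.
Proof.
move=> finj fG; rewrite -(card_in_imset (sub_in2 (subsetP (subsetIl _ _)) finj)).
apply: eq_card => y; apply/imsetP/idP => [[x /setIP[_]] | yS].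
  by rewrite inE => fxS ->.
have /imsetP[x xG yfx] : y \in f @: G by rewrite fG inE.
by exists x; rewrite // !inE xG -yfx.
Qed.

Lemma ord_enum_onto (T : finType) (A : {set T}) n :
  #|A| = n.+1 -> exists g : T -> 'I_n.+1, {in A &, injective g} /\ g @: A = setT.
Proof.
move=> cA; have [x0 x0A] : exists x0, x0 \in A by apply/card_gt0P; rewrite cA.
exists (fun x => cast_ord cA (enum_rank_in x0A x)); split.
  by move=> x y xA yA /cast_ord_inj; apply: enum_rank_in_inj.
apply/setP => j; rewrite inE; apply/imsetP.
exists (enum_val (cast_ord (esym cA) j)); first exact: enum_valP.
by rewrite enum_valK_in cast_ordKV.
Qed.

Lemma enum_val_imset_sub (T : finType) (A : {set T}) (Z : {set 'I_#|A|}) :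
  [set enum_val i | i in Z] \subset A.
Proof. by apply/subsetP => x /imsetP[i _ ->]; apply: enum_valP. Qed.

Lemma card_enum_val_imset (T : finType) (A : {set T}) (Z : {set 'I_#|A|}) :
  #|[set enum_val i | i in Z]| = #|Z|.
Proof. by rewrite card_imset //; apply: enum_val_inj. Qed.

Lemma card_leq_fibers (I J : finType) (g : I -> J) (S : {pred J}) k :
  (forall i, g i \in S) -> (forall y, #|[set i | g i == y]| <= k) -> #|I| <= k * #|S|.
Proof.
move=> gS fibers; rewrite -[#|I|]sum1_card (partition_big g (mem S)) //=.
rewrite mulnC -sum_nat_const.
by apply: leq_sum => y _; rewrite sum1dep_card.
Qed.

Lemma const_coef_mulmx_sub (F : fieldType) m n p (A : 'M[F]_(m, n)) (S : 'M[F]_(p, n))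
    (c : 'rV[F]_m) (Z : {set 'I_m}) :
  {in Z &, forall i j, c ord0 i = c ord0 j} -> (forall i, i \notin Z -> (row i A <= S)%MS) ->
  ((c *m A)%R <= S + (\sum_(i in Z) row i A)%R)%MS.
Proof.
move=> c_const A_S; rewrite mulmx_sum_row (bigID (mem Z)) /=.
apply: addmx_sub; last first.
  by apply: submx_trans (addsmxSl _ _); apply: summx_sub => i /A_S; apply: scalemx_sub.
apply: submx_trans (addsmxSr _ _).
have [Z0 | [i0 i0Z]] := set_0Vmem Z; first by rewrite Z0 big_pred0 ?sub0mx // => i; rewrite inE.
rewrite (eq_bigr (fun i => (c ord0 i0 *: row i A)%R)) -?scaler_sumr ?scalemx_sub //.
by move=> i iZ; rewrite (c_const i i0).
Qed.

Section MatroidRank.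
Variables (T : finType) (M : matroid T).
Implicit Types (A B C X Y L : {set T}) (e : T).

Lemma indep_leq_mrank A X : A \in indep M -> A \subset X -> #|A| <= mrank M X.
Proof. by move=> Ai AX; apply: (leq_bigmax_cond (F := fun A : {set T} => #|A|)); rewrite Ai. Qed.

Lemma mrank_leq_card X : mrank M X <= #|X|.
Proof. by apply/bigmax_leqP => A /andP[_]; apply: subset_leq_card. Qed.

Lemma mrankS X Y : X \subset Y -> mrank M X <= mrank M Y.
Proof.
move=> XY; apply/bigmax_leqP => A /andP[Ai AX].
exact: indep_leq_mrank Ai (subset_trans AX XY).
Qed.

Lemma mrank_indep A : A \in indep M -> mrank M A = #|A|.
Proof. by move=> Ai; apply/eqP; rewrite eqn_leq mrank_leq_card indep_leq_mrank. Qed.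

Lemma max_indep_setU1 C X e :
  C \subset X -> #|C| = mrank M X -> e \in X :\: C -> e |: C \notin indep M.
Proof.
move=> CX cC /setDP[eX eC]; apply/negP => eCi.
have eCX : e |: C \subset X by rewrite subUset sub1set eX.
by have := indep_leq_mrank eCi eCX; rewrite cardsU1 eC -cC add1n ltnn.
Qed.

Hypothesis M_matroid : is_matroid M.

Lemma indep0 : set0 \in indep M.
Proof. by case: M_matroid. Qed.

Lemma indep_ground A : A \in indep M -> A \subset ground M.
Proof. by case: M_matroid => _ + _ _; apply. Qed.

Lemma indepS A B : A \subset B -> B \in indep M -> A \in indep M.
Proof. by move=> AB Bi; case: M_matroid => _ _ her _; apply: her AB. Qed.

Lemma indep_augment A B : A \in indep M -> B \in indep M -> #|A| < #|B| ->
  exists2 x, x \in B :\: A & x |: A \in indep M.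
Proof. by case: M_matroid => _ _ _; apply. Qed.

Lemma mrank_witness X : exists A, [/\ A \in indep M, A \subset X & #|A| = mrank M X].
Proof.
rewrite /mrank; have : 0 < #|[pred A : {set T} | (A \in indep M) && (A \subset X)]|.
  by apply/card_gt0P; exists set0; rewrite inE indep0 sub0set.
move/(eq_bigmax_cond (fun A : {set T} => #|A|)) => [A].
by rewrite inE => /andP[Ai AX] ->; exists A.
Qed.

Lemma indep_mrankE A : (A \in indep M) = (mrank M A == #|A|).
Proof.
apply/idP/eqP => [/mrank_indep // | rA].
have [B [Bi BA cB]] := mrank_witness A.
have /eqP <- // : B == A by rewrite eqEcard BA cB rA /=.
Qed.

Lemma mrankU_leq X Y : mrank M (X :|: Y) <= mrank M X + #|Y|.
Proof.
have [A [Ai AXY <-]] := mrank_witness (X :|: Y).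
rewrite -(cardsID X A) leq_add //.
  by rewrite indep_leq_mrank ?subsetIr // (indepS (subsetIl A X)).
apply/subset_leq_card/subsetP => x /setDP[xA xX].
by move: (subsetP AXY x xA); rewrite inE (negbTE xX).
Qed.

Lemma mrank_setU_spanned C L :
  {in L, forall e, mrank M (e |: C) = mrank M C} -> mrank M (C :|: L) = mrank M C.
Proof.
move=> spanned; apply/eqP; rewrite eqn_leq andbC mrankS ?subsetUl //=.
have [A [Ai ACL <-]] := mrank_witness (C :|: L).
have [A0 [A0i A0C cA0]] := mrank_witness C.
rewrite -cA0 leqNgt; apply/negP => lt.
have [x /setDP[xA xA0] xA0i] := indep_augment A0i Ai lt.
have := indep_leq_mrank xA0i (setUS [set x] A0C); rewrite cardsU1 xA0 add1n.
have /setUP[xC | xL] := subsetP ACL x xA.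
  by rewrite (setUidPr _) ?sub1set // cA0 ltnn.
by rewrite spanned // cA0 ltnn.
Qed.

Lemma indep_setU_disjointE X C B L A :
  C \subset X -> #|C| = mrank M X -> B \in indep M -> C \subset B -> L \subset X :\: C ->
  A \subset B :|: L -> (A :|: C \in indep M) = [disjoint A & L].
Proof.
move=> CX cC Bi CB LXC ABL; apply/idP/idP => [ACi | AL].
  apply/pred0P => e /=; apply/negbTE/andP => -[eA eL].
  apply: (negP (max_indep_setU1 CX cC (subsetP LXC e eL))); apply: (indepS _ ACi).
  by rewrite setSU ?sub1set.
apply: (indepS _ Bi); rewrite subUset CB andbT; apply/subsetP => x xA.
have /setUP[// | xL] := subsetP ABL x xA.
by rewrite (disjointFr AL xA) in xL.
Qed.

Lemma indep_extend_basis A :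
  A \in indep M -> exists B, [/\ B \in indep M, A \subset B & #|B| = rk M].
Proof.
move=> Ai; pose P B := (B \in indep M) && (A \subset B).
have PA : P A by rewrite /P Ai subxx.
case: (@arg_maxnP _ A P (fun B => #|B|) PA) => B /andP[Bi AB] Bmax.
exists B; split => //; apply/eqP; rewrite eqn_leq indep_leq_mrank ?indep_ground //=.
have [B0 [B0i _ cB0]] := mrank_witness (ground M).
rewrite /rk -cB0 leqNgt; apply/negP => lt.
have [x /setDP[_ xB] xBi] := indep_augment Bi B0i lt.
have := Bmax (x |: B); rewrite /P xBi (subset_trans AB (subsetUr _ _)) cardsU1 xB.
by move=> /(_ isT) /=; rewrite add1n ltnn.
Qed.

End MatroidRank.

Definition restrict (T : finType) (M : matroid T) (X : {set T}) : matroid T :=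
  delete M (ground M :\: X).

Section Restriction.
Variables (T : finType) (M : matroid T) (X : {set T}).
Hypothesis XE : X \subset ground M.
Implicit Types (A B Y : {set T}).

Lemma ground_restrict : ground (restrict M X) = X.
Proof. by rewrite /= setDDr setDv set0U; apply/setIidPr. Qed.

Lemma indep_restrict A : (A \in indep (restrict M X)) = (A \in indep M) && (A \subset X).
Proof. by rewrite inE -[ground M :\: _]/(ground (restrict M X)) ground_restrict. Qed.

Lemma mrank_restrict Y : Y \subset X -> mrank (restrict M X) Y = mrank M Y.
Proof.
move=> YX; apply: eq_bigl => A; rewrite indep_restrict -andbA.
by case AY: (A \subset Y); rewrite ?andbF // (subset_trans AY YX) andbT.
Qed.

Lemma rk_restrict : rk (restrict M X) = mrank M X.
Proof. by rewrite /rk ground_restrict mrank_restrict. Qed.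

Lemma restrict_matroid : is_matroid M -> is_matroid (restrict M X).
Proof.
move=> M_matroid; split.
- by rewrite indep_restrict indep0 ?sub0set.
- by move=> A; rewrite indep_restrict ground_restrict => /andP[].
- move=> A B; rewrite !indep_restrict => /andP[Bi BX] AB.
  by rewrite (indepS M_matroid AB Bi) (subset_trans AB BX).
- move=> A B; rewrite !indep_restrict => /andP[Ai AX] /andP[Bi BX] lt.
  have [x /setDP[xB xA] xAi] := indep_augment M_matroid Ai Bi lt.
  exists x; first by rewrite inE xA xB.
  by rewrite indep_restrict xAi subUset sub1set (subsetP BX) // AX.
Qed.

End Restriction.

Section Minors.
Variables (T : finType) (M : matroid T).
Implicit Types (A C D : {set T}) (e : T).

Lemma indep_minorE C D A : A \subset ground M :\: C :\: D ->
  (A \in indep (delete (contract M C) D)) = (mrank M (A :|: C) == #|A| + mrank M C).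
Proof.
move=> AG; have /subset_trans/(_ (subsetDl _ D)) AMC := AG.
by rewrite !inE /= AG AMC andbT.
Qed.

Lemma minor_loop_spanned C D e : is_matroid M -> e \in ground M :\: C :\: D ->
  [set e] \notin indep (delete (contract M C) D) -> mrank M (e |: C) = mrank M C.
Proof.
move=> M_matroid eG; rewrite indep_minorE ?sub1set // cards1 setUC => ne.
apply/eqP; rewrite eqn_leq andbC mrankS ?subsetUl //=.
have := mrankU_leq M_matroid C [set e]; by rewrite cards1 addn1 leq_eqVlt -add1n (negbTE ne) ltnS.
Qed.

End Minors.

Lemma dsumU_ground k l : ground (dsum (U k k) (U 0 l)) = setT.
Proof. by apply/setP => -[] j; rewrite !inE; apply/orP; [left | right]; apply: imset_f. Qed.

Lemma dsumU_indep k l (A : {set 'I_k + 'I_l}) :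
  (A \in indep (dsum (U k k) (U 0 l))) = [forall j, inr j \notin A].
Proof.
rewrite [in LHS]inE -[_ :|: _]/(ground (dsum (U k k) (U 0 l))) dsumU_ground subsetT !inE.
rewrite (leq_trans (max_card _)) ?card_ord //= andbT leqn0 cards_eq0.
apply/eqP/forallP => [/setP A0 j | nA]; first by have := A0 j; rewrite !inE => ->.
by apply/setP => j; rewrite !inE (negbTE (nA j)).
Qed.

Definition kl_set (k l : nat) (T : finType) (M : matroid T) (X : {set T}) : Prop :=
  [/\ X \subset ground M, mrank M X + k <= rk M & mrank M X + l <= #|X|].

Lemma minor_kl_set k l (T : finType) (M : matroid T) : is_matroid M ->
  (exists N, is_minor N M /\ iso N (dsum (U k k) (U 0 l))) -> exists X, kl_set k l M X.
Proof.
move=> M_matroid [_ [[C [D [CE _ _ ->]]] [f [finj fG find]]]].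
rewrite dsumU_ground in fG.
set G := ground (delete (contract M C) D).
have GE : G \subset ground M :\: C by apply: subsetDl.
pose I := G :&: f @^-1: [set inl j | j in setT].
pose L := G :&: f @^-1: [set inr j | j in setT].
have inl_inj : injective (@inl 'I_k 'I_l) by move=> i j [].
have inr_inj : injective (@inr 'I_k 'I_l) by move=> i j [].
have cI : #|I| = k by rewrite card_preim_onto // card_imset // cardsT card_ord.
have cL : #|L| = l by rewrite card_preim_onto // card_imset // cardsT card_ord.
have IE : I :|: C \subset ground M.
  by rewrite subUset CE andbT (subset_trans (subsetIl _ _)) // (subset_trans GE) ?subsetDl.
have rI : mrank M (I :|: C) = #|I| + mrank M C.
  apply/eqP; rewrite -(indep_minorE (D := D)) ?subsetIl //; apply/(find I (subsetIl _ _)).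
  rewrite dsumU_indep; apply/forallP => j; apply/imsetP => -[x /setIP[_]].
  by rewrite inE => /imsetP[i _ ->].
have spanned : {in L, forall e, mrank M (e |: C) = mrank M C}.
  move=> e /setIP[eG]; rewrite inE => /imsetP[j _ fej].
  have eN : [set e] \subset G by rewrite sub1set.
  apply: minor_loop_spanned eG _ => //; apply/negP => /(find _ eN).1.
  by rewrite imset_set1 dsumU_indep fej => /forallP/(_ j); rewrite inE eqxx.
have : L \subset ground M :\: C by apply: subset_trans (subsetIl _ _) GE.
rewrite subsetD => /andP[LE LC].
exists (C :|: L); split.
- by rewrite subUset CE LE.
- by rewrite mrank_setU_spanned // -cI addnC -rI mrankS.
- rewrite mrank_setU_spanned // cardsU disjoint_setI0 1?disjoint_sym // cards0 subn0.
  by rewrite -cL leq_add2r mrank_leq_card.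
Qed.

Lemma iso_dsumU k l (T : finType) (N : matroid T) (I L : {set T}) :
  ground N = I :|: L -> [disjoint I & L] -> #|I| = k.+1 -> #|L| = l.+1 ->
  (forall A : {set T}, A \subset ground N -> (A \in indep N) = [disjoint A & L]) ->
  iso N (dsum (U k.+1 k.+1) (U 0 l.+1)).
Proof.
move=> NG IL cI cL Nindep.
have [gI [gI_inj gI_onto]] := ord_enum_onto cI.
have [gL [gL_inj gL_onto]] := ord_enum_onto cL.
pose f x : 'I_k.+1 + 'I_l.+1 := if x \in I then inl (gI x) else inr (gL x).
have fI x : x \in I -> f x = inl (gI x) by move=> xI; rewrite /f xI.
have fL x : x \in L -> f x = inr (gL x) by move=> xL; rewrite /f (disjointFl IL xL).
exists f; rewrite dsumU_ground; split.
- rewrite NG => x y /setUP[xI | xL] /setUP[yI | yL].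
  + by rewrite !fI // => -[] /gI_inj; apply.
  + by rewrite fI ?fL.
  + by rewrite fL ?fI.
  + by rewrite !fL // => -[] /gL_inj; apply.
- apply/eqP; rewrite eqEsubset subsetT /= NG; apply/subsetP => -[] j _.
  + have /imsetP[x xI ->] : j \in gI @: I by rewrite gI_onto inE.
    by apply/imsetP; exists x; rewrite ?inE ?xI ?fI.
  + have /imsetP[x xL ->] : j \in gL @: L by rewrite gL_onto inE.
    by apply/imsetP; exists x; rewrite ?inE ?xL ?orbT ?fL.
- move=> A AN; rewrite Nindep // dsumU_indep.
  have {}AN : A \subset I :|: L by rewrite -NG.
  split => [AL | /forallP nA].
  + apply/forallP => j; apply/imsetP => -[x xA].
    have /setUP[xI | xL] := subsetP AN x xA; first by rewrite fI.
    by rewrite (disjointFr AL xA) in xL.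
  + apply/pred0P => x /=; apply/negbTE/andP => -[xA xL].
    by have := nA (gL x); rewrite -fL // imset_f.
Qed.

Lemma kl_set_minor k l (T : finType) (M : matroid T) (X : {set T}) : is_matroid M ->
  kl_set k.+1 l.+1 M X -> exists N, is_minor N M /\ iso N (dsum (U k.+1 k.+1) (U 0 l.+1)).
Proof.
move=> M_matroid [XE rXk rXl].
have [C [Ci CX cC]] := mrank_witness M_matroid X.
have [B [Bi CB cB]] := indep_extend_basis M_matroid Ci.
have [I IBC cI] : exists2 I : {set T}, I \subset B :\: C & #|I| = k.+1.
  by apply: exists_subset_card; rewrite cardsD (setIidPr CB) cB cC; lia.
have [L LXC cL] : exists2 L : {set T}, L \subset X :\: C & #|L| = l.+1.
  by apply: exists_subset_card; rewrite cardsD (setIidPr CX) cC; lia.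
have IG : I \subset ground M :\: C.
  by apply: subset_trans IBC _; apply: setSD; exact: (indep_ground M_matroid Bi).
have LG : L \subset ground M :\: C by apply: subset_trans LXC _; apply: setSD.
have IB : I \subset B := subset_trans IBC (subsetDl _ _).
have IL : [disjoint I & L].
  rewrite -(indep_setU_disjointE M_matroid CX cC Bi CB LXC) ?(subset_trans IB) ?subsetUl //.
  by rewrite (indepS M_matroid _ Bi) // subUset CB IB.
set N := restrict (contract M C) (I :|: L).
have NG : ground N = I :|: L by rewrite ground_restrict // subUset IG LG.
have Nindep (A : {set T}) : A \subset ground N -> (A \in indep N) = [disjoint A & L].
  move=> AN; rewrite indep_minorE // (mrank_indep Ci).
  rewrite NG in AN; have : A \subset ground M :\: C by rewrite (subset_trans AN) // subUset IG LG.
  rewrite subsetD => /andP[_ AC].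
  have cAC : #|A :|: C| = #|A| + #|C| by rewrite cardsU (disjoint_setI0 AC) cards0 subn0.
  rewrite -cAC -indep_mrankE // (indep_setU_disjointE M_matroid CX cC Bi CB LXC) //.
  by apply: subset_trans AN _; apply: setSU.
exists N; split; last exact: iso_dsumU NG IL cI cL Nindep.
exists C, (ground M :\: C :\: (I :|: L)); split => //.
- exact: subset_trans CX XE.
- exact: subset_trans (subsetDl _ _) (subsetDl _ _).
- by rewrite disjoint_sym disjoints_subset setDDl setDE setCU setICA subsetIl.
Qed.

Lemma kl_uniformP k l (T : finType) (M : matroid T) : is_matroid M ->
  kl_uniform k.+1 l.+1 M <-> ~ exists X, kl_set k.+1 l.+1 M X.
Proof.
move=> M_matroid; split=> [kl [X XS] | noX minor].
  exact: kl (kl_set_minor M_matroid XS).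
exact: noX (minor_kl_set M_matroid minor).
Qed.

Lemma dual_indepE (T : finType) (M : matroid T) (Y : {set T}) :
  is_matroid M -> Y \subset ground M ->
  (Y \in indep (dual M)) = (rk M <= mrank M (ground M :\: Y)).
Proof.
move=> M_matroid YE; rewrite inE /= YE /=; apply/existsP/idP => [[B] | rk_le].
  rewrite /is_basis => /andP[/andP[Bi /eqP <-] YB]; apply: (indep_leq_mrank Bi).
  by rewrite subsetD (indep_ground M_matroid Bi) disjoint_sym.
have [B [Bi BEY cB]] := mrank_witness M_matroid (ground M :\: Y).
exists B; rewrite /is_basis Bi eqn_leq cB mrankS ?subsetDl //= rk_le.
by move: BEY; rewrite subsetD disjoint_sym => /andP[].
Qed.


Section Representation.
Variables (T : finType) (M : matroid T) (F : fieldType) (n : nat) (v : T -> 'rV[F]_n).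
Hypothesis M_matroid : is_matroid M.
Hypothesis v_represents : forall A : {set T}, A \subset ground M ->
  (A \in indep M <->
   \rank (\matrix_(i < #|A|, j < n) v (@enum_val T (mem A) i) 0 j)%R = #|A|).
Implicit Types (A B X : {set T}) (e : T).

Definition vrows A : 'M[F]_(#|A|, n) := (\matrix_(i < #|A|, j < n) v (enum_val i) 0 j)%R.

Lemma row_vrows A i : row i (vrows A) = v (enum_val i).
Proof. by apply/rowP => j; rewrite !mxE. Qed.

Lemma vrows_sub A e : e \in A -> (v e <= vrows A)%MS.
Proof. by move=> eA; rewrite -(enum_rankK_in eA eA) -row_vrows row_sub. Qed.

Lemma indep_vrowsE A : A \subset ground M -> (A \in indep M) = (\rank (vrows A) == #|A|).
Proof. by move=> AE; apply/idP/eqP => /(v_represents AE). Qed.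

Lemma mrank_leq_mxrank m (S : 'M[F]_(m, n)) X :
  X \subset ground M -> {in X, forall e, (v e <= S)%MS} -> mrank M X <= \rank S.
Proof.
move=> XE XS; apply/bigmax_leqP => A /andP[Ai AX].
move: Ai; rewrite indep_vrowsE ?(subset_trans AX XE) // => /eqP <-.
by apply/mxrankS/row_subP => i; rewrite row_vrows XS ?(subsetP AX) ?enum_valP.
Qed.

Lemma basis_spans B e : B \in indep M -> #|B| = rk M -> e \in ground M ->
  (v e <= vrows B)%MS.
Proof.
move=> Bi cB eE; have [eB | eB] := boolP (e \in B); first exact: vrows_sub.
apply/negPn/negP => veB.
have eBE : e |: B \subset ground M by rewrite subUset sub1set eE (indep_ground M_matroid Bi).
have rB : \rank (vrows B) = #|B| by apply/eqP; rewrite -indep_vrowsE ?(indep_ground M_matroid Bi).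
have rBe : \rank (vrows B) < \rank (vrows B + v e)%MS.
  rewrite ltn_neqAle (mxrank_leqif_sup (addsmxSl _ _)) addsmx_sub submx_refl /= veB.
  by rewrite mxrankS ?addsmxSl.
have veBe : (vrows B + v e <= vrows (e |: B))%MS.
  rewrite addsmx_sub vrows_sub ?setU11 // andbT.
  by apply/row_subP => i; rewrite row_vrows vrows_sub // setU1r ?enum_valP.
have : e |: B \in indep M.
  rewrite indep_vrowsE // eqn_leq rank_leq_row /=; apply: leq_trans (mxrankS veBe).
  by rewrite cardsU1 eB add1n; move: rBe; rewrite rB.
by move=> /indep_leq_mrank/(_ eBE); rewrite cardsU1 eB add1n cB ltnn.
Qed.

Lemma mrank_merge_rows B (Z : {set 'I_#|B|}) (N : {set T}) (c : T -> 'rV[F]_#|B|) :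
  N :|: B \subset ground M ->
  {in N, forall e, v e = (c e *m vrows B)%R} ->
  {in N, forall e, {in Z &, forall i j, c e ord0 i = c e ord0 j}} ->
  mrank M (N :|: (B :\: [set enum_val i | i in Z])) + #|Z| <= #|B| + 1.
Proof.
move=> NBE cN c_const; set Zs := [set enum_val i | i in Z].
have ZsB : Zs \subset B := enum_val_imset_sub Z.
have cZs : #|Zs| = #|Z| := card_enum_val_imset Z.
set u := (\sum_(i in Z) row i (vrows B))%R.
have span : {in N :|: (B :\: Zs), forall e, (v e <= vrows (B :\: Zs) + u)%MS}.
  move=> e /setUP[eN | eBZ]; last by rewrite (submx_trans (vrows_sub eBZ)) ?addsmxSl.
  rewrite cN //; apply: const_coef_mulmx_sub (c_const e eN) _ => i iZ.
  rewrite row_vrows vrows_sub // inE enum_valP andbT.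
  by apply: contra iZ => /imsetP[j jZ /enum_val_inj ->].
have := mrank_leq_mxrank (subset_trans (setUS N (subsetDl B Zs)) NBE) span.
have := leq_trans (mxrank_adds_leqif (vrows (B :\: Zs)) u)
  (leq_add (rank_leq_row (vrows (B :\: Zs))) (rank_leq_row u)).
have cBZ : #|B :\: Zs| = #|B| - #|Z| by rewrite cardsD (setIidPr ZsB) cZs.
have := subset_leq_card ZsB; rewrite cZs; lia.
Qed.

End Representation.

Section RankBound.
Variables (k l : nat) (T : finType) (M : matroid T).
Variables (F : finFieldType) (n : nat) (v : T -> 'rV[F]_n).
Hypothesis M_matroid : is_matroid M.
Hypothesis M_cosimple : cosimple M.
Hypothesis v_represents : forall A : {set T}, A \subset ground M ->
  (A \in indep M <->
   \rank (\matrix_(i < #|A|, j < n) v (@enum_val T (mem A) i) 0 j)%R = #|A|).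
Hypothesis M_no_kl_set : ~ exists X, kl_set k.+1 l.+1 M X.
Variables (B N : {set T}).
Hypotheses (Bi : B \in indep M) (cB : #|B| = rk M).
Hypotheses (NEB : N \subset ground M :\: B) (cN : #|N| = minn l.+2 #|ground M :\: B|).

Definition coords (e : T) : 'rV[F]_#|B| := (v e *m pinvmx (vrows v B))%R.

Definition column (i : 'I_#|B|) : {ffun T -> F} :=
  [ffun e => if e \in N then coords e ord0 i else 0%R].

Lemma mrank_merge_fiber g (Z : {set 'I_#|B|}) : Z \subset [set i | column i == g] ->
  mrank M (N :|: (B :\: [set enum_val i | i in Z])) + #|Z| <= #|B| + 1.
Proof.
move=> Zg; have NE : N \subset ground M := subset_trans NEB (subsetDl _ _).
apply: (mrank_merge_rows v_represents (c := coords)).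
- by rewrite subUset NE (indep_ground M_matroid Bi).
- move=> e eN; rewrite /coords mulmxKpV //.
  exact: (basis_spans M_matroid v_represents Bi cB (subsetP NE e eN)).
- move=> e eN i j iZ jZ; move: (subsetP Zg i iZ) (subsetP Zg j jZ).
  rewrite !inE => /eqP ci /eqP cj.
  by have := congr1 (fun f : {ffun T -> F} => f e) (etrans ci (esym cj)); rewrite !ffunE eN.
Qed.

Lemma fiber_kl_set g (Z : {set 'I_#|B|}) :
  l.+2 <= #|ground M :\: B| -> Z \subset [set i | column i == g] -> #|Z| = k.+2 ->
  kl_set k.+1 l.+1 M (N :|: (B :\: [set enum_val i | i in Z])).
Proof.
move=> lE Zg cZ; have := mrank_merge_fiber Zg.
have := subset_leq_card (enum_val_imset_sub Z); rewrite card_enum_val_imset cZ.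
set X := N :|: _ => ZB rX; split.
- rewrite subUset (subset_trans NEB (subsetDl _ _)).
  by rewrite (subset_trans (subsetDl _ _) (indep_ground M_matroid Bi)).
- by rewrite -cB; lia.
have NBZ : [disjoint N & B :\: [set enum_val i | i in Z]].
  by apply: disjointWr (subsetDl _ _) _; move: NEB; rewrite subsetD => /andP[].
rewrite cardsU (disjoint_setI0 NBZ) cards0 subn0 cardsD (setIidPr (enum_val_imset_sub Z)).
by rewrite card_enum_val_imset cN (minn_idPl lE) cZ; lia.
Qed.

Lemma fiber_pair_drops_rank g (Z : {set 'I_#|B|}) :
  #|ground M :\: B| < l.+2 -> Z \subset [set i | column i == g] -> #|Z| = 2 -> False.
Proof.
move=> Elt Zg cZ; set Y := [set enum_val i | i in Z].
have NEB_eq : N = ground M :\: B.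
  by apply/eqP; rewrite eqEcard NEB cN (minn_idPr (ltnW Elt)) leqnn.
have YE : Y \subset ground M := subset_trans (enum_val_imset_sub Z) (indep_ground M_matroid Bi).
have /cards2P[x [y [xy Yxy]]] : #|Y| == 2 by rewrite card_enum_val_imset cZ.
have Y_ground z : z \in [set x; y] -> z \in ground M by rewrite -Yxy => /(subsetP YE).
have := M_cosimple.2 x y (Y_ground x (set21 _ _)) (Y_ground y (set22 _ _)) xy.
rewrite -Yxy dual_indepE // => rk_le.
have EY : ground M :\: Y \subset N :|: (B :\: Y).
  rewrite NEB_eq; apply/subsetP => z; rewrite !inE => /andP[-> ->].
  by case: (z \in B); rewrite ?orbT.
have merge := mrank_merge_fiber Zg; rewrite cZ in merge.
have := leq_trans (leq_add (leq_trans rk_le (mrankS M EY)) (leqnn 2)) merge.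
by rewrite cB addn2 addn1 ltnn.
Qed.

Lemma column_fiber_small g : #|[set i | column i == g]| <= k.+1.
Proof.
rewrite leqNgt; apply/negP => big.
have [lE | Elt] := leqP l.+2 #|ground M :\: B|.
  have [Z Zg cZ] := exists_subset_card big.
  exact: M_no_kl_set (ex_intro _ _ (fiber_kl_set lE Zg cZ)).
have [Z Zg cZ] := exists_subset_card (leq_trans (isT : 2 <= k.+2) big).
exact: fiber_pair_drops_rank Elt Zg cZ.
Qed.

Lemma rk_leq_columns : rk M <= k.+1 * #|F| ^ l.+2.
Proof.
have column_on i : column i \in pffun_on 0%R N [set: F].
  apply/pffun_onP; split=> [|y _]; last by rewrite inE.
  by apply/subsetP => e; rewrite inE ffunE; case: (e \in N); rewrite ?eqxx.
rewrite -cB -[#|B|]card_ord.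
apply: leq_trans (card_leq_fibers column_on column_fiber_small) _.
rewrite card_pffun_on cardsT leq_mul2l leq_pexp2l ?orbT //; last by rewrite cN geq_minl.
by apply/card_gt0P; exists 0%R.
Qed.

End RankBound.

Lemma good_rank_bound k l q (T : finType) (M : matroid T) : 0 < k -> 0 < l ->
  good k l q M -> rk M <= k * q ^ l.+1.
Proof.
case: k => // k _; case: l => // l _ [M_matroid _ M_cosimple [F [n [v [cF v_represents]]]] M_kl].
have [B [Bi _ cB]] := mrank_witness M_matroid (ground M).
have [N NEB cN] := exists_subset_card (geq_minr l.+2 #|ground M :\: B|).
rewrite -cF; apply: (rk_leq_columns M_matroid M_cosimple v_represents _ Bi cB NEB cN).
exact/(kl_uniformP _ _ M_matroid).
Qed.

Lemma restrict_good k l q (T : finType) (M : matroid T) (X : {set T}) :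
  good k.+1 l.+1 q M -> X \subset ground M ->
  mrank M X + k = rk M -> mrank M X + l.+2 <= #|X| -> good 1 l.+1 q (restrict M X).
Proof.
move=> [M_matroid [M_loopless M_parallel] _ [F [n [v [cF v_represents]]]] M_kl] XE rX cX.
have no_set := (kl_uniformP _ _ M_matroid).1 M_kl.
have R_matroid := restrict_matroid XE M_matroid.
have rank_stable (Y : {set T}) : Y \subset X -> #|Y| <= 2 -> mrank M X <= mrank M (X :\: Y).
  move=> YX cY; rewrite leqNgt; apply/negP => lt; apply: no_set; exists (X :\: Y); split.
  - exact: subset_trans (subsetDl _ _) XE.
  - lia.
  - by rewrite cardsD (setIidPr YX); have := mrank_leq_card M (X :\: Y); lia.
have small_dual_indep (Y : {set T}) : Y \subset X -> #|Y| <= 2 -> Y \in indep (dual (restrict M X)).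
  move=> YX cY; rewrite dual_indepE ?ground_restrict // rk_restrict //.
  by rewrite mrank_restrict ?subsetDl // rank_stable.
split => //.
- split=> [x | x y]; rewrite ground_restrict // => xX.
    by rewrite indep_restrict // M_loopless ?sub1set // (subsetP XE).
  move=> yX xy; rewrite indep_restrict // M_parallel ?(subsetP XE) //.
  by rewrite subUset !sub1set xX.
- split=> [x | x y]; rewrite -[ground (dual _)]/(ground (restrict M X)) ground_restrict //.
    by move=> xX; apply: small_dual_indep; rewrite ?sub1set ?cards1.
  move=> xX yX xy; apply: small_dual_indep; first by rewrite subUset !sub1set xX.
  by rewrite cards2 xy.
- exists F, n, v; split => // A; rewrite ground_restrict // => AX.
  by rewrite indep_restrict // AX andbT; apply/v_represents/(subset_trans AX).
- apply/(kl_uniformP _ _ R_matroid) => -[W [WX rW cW]].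
  rewrite ground_restrict // in WX; rewrite rk_restrict // mrank_restrict // in rW.
  rewrite mrank_restrict // in cW; apply: no_set; exists W; split => //.
  + exact: subset_trans WX XE.
  + lia.
Qed.

Definition empty_matroid : matroid 'I_0 := Matroid set0 [set set0].

Lemma empty_matroid_good k l q : 0 < k -> prime_power q -> good k l q empty_matroid.
Proof.
have setI0 (A : {set 'I_0}) : A = set0 by apply/setP => -[].
case: k => // k _ [p [e [p_prime e_gt0 ->]]]; split.
- split=> [|A|A B|A B]; rewrite ?inE // ?(setI0 A) ?sub0set //.
  by rewrite (setI0 B) ltnn.
- by split=> -[].
- by split=> -[].
- have [F _ cF] := pPrimePowerField p_prime e_gt0.
  exists F, 0, (fun _ => 0%R); split => // A _; rewrite (setI0 A) inE eqxx cards0.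
  by split=> // _; apply/eqP; rewrite -leqn0 rank_leq_col.
- move=> [N [[C [D [_ _ _ ->]]] [f [_ fN _]]]].
  have : inl ord0 \in ground (dsum (U k.+1 k.+1) (U 0 l)) by rewrite dsumU_ground inE.
  by rewrite -fN (setI0 (ground _)) imset0 inE.
Qed.

Lemma rk_empty_matroid : rk empty_matroid = 0.
Proof. by apply/eqP; rewrite -leqn0; apply: leq_trans (mrank_leq_card _ _) _; rewrite cards0. Qed.

Definition attains_rank k l q r : Prop :=
  exists (T : finType) (M : matroid T), good k l q M /\ rk M = r.

(* The range r <= k q^(l+1) contains every attained rank by [good_rank_bound]. *)
Definition max_rank k l q : nat :=
  \max_(r < (k * q ^ l.+1).+1 | excluded_middle_informative (attains_rank k l q r)) r.

Lemma max_rank_bound k l q (T : finType) (M : matroid T) : 0 < k -> 0 < l ->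
  good k l q M -> rk M <= max_rank k l q.
Proof.
move=> k_gt0 l_gt0 M_good; have rk_lt : rk M < (k * q ^ l.+1).+1.
  by rewrite ltnS good_rank_bound.
rewrite -[rk M]/(nat_of_ord (Ordinal rk_lt)); apply: leq_bigmax_cond.
by apply/sumboolP; exists T, M.
Qed.

Lemma max_rank_attained k l q : 0 < k -> prime_power q -> attains_rank k l q (max_rank k l q).
Proof.
move=> k_gt0 q_pp.
have : 0 < #|[pred r : 'I_(k * q ^ l.+1).+1 | excluded_middle_informative (attains_rank k l q r)]|.
  apply/card_gt0P; exists ord0; rewrite inE; apply/sumboolP.
  by exists _, empty_matroid; rewrite rk_empty_matroid; split => //; apply: empty_matroid_good.
by rewrite /max_rank => /(eq_bigmax_cond (@nat_of_ord _)) [r /sumboolP r_attained ->].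
Qed.

Theorem proposition2p3 :
  exists f : nat -> nat -> nat -> nat,
    forall k l q : nat, 0 < k -> 0 < l -> prime_power q ->
      [/\ (* f(k,l,q) bounds the rank of every such matroid ... *)
          (forall (T : finType) (M : matroid T), good k l q M -> rk M <= f k l q),
          (* ... and is attained, i.e. it is the maximum rank *)
          (exists (T : finType) (M : matroid T), good k l q M /\ rk M = f k l q) &
          (2 <= k ->
             f k l q <= maxn (f k.-1 l.+1 q) (f 1 l q + k.-1))].
Proof.
exists max_rank => k l q k_gt0 l_gt0 q_pp; split.
- by move=> T M; apply: max_rank_bound.
- exact: max_rank_attained.
case: k k_gt0 => [|[|k]] // _ _; case: l l_gt0 => [|l] // _ /=.
have [T [M [M_good <-]]] := max_rank_attained l.+1 (isT : 0 < k.+2) q_pp.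
have [M_matroid M_simple M_cosimple M_rep M_kl] := M_good.
have [[X [XE rXk rXl]] | no_set] := classic (exists X, kl_set k.+1 l.+2 M X).
- have rX : mrank M X + k.+1 = rk M.
    apply/eqP; rewrite eqn_leq rXk leqNgt; apply/negP => lt.
    have := (kl_uniformP _ _ M_matroid).1 M_kl; apply; exists X; split => //; lia.
  rewrite -rX (leq_trans _ (leq_maxr _ _)) // leq_add2r -(rk_restrict XE).
  exact: max_rank_bound (restrict_good M_good XE rX rXl).
- rewrite (leq_trans _ (leq_maxl _ _)) //; apply: max_rank_bound => //.
  by split => //; apply/kl_uniformP.
Qed.
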